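(* Let $F_1=e^{i(\alpha+\beta)}+e^{i\gamma}$, $F_2=-e^{i\beta}+e^{i(\alpha+\gamma)}$, $F_3=-e^{i\alpha}+e^{i(\beta+\gamma)}$, $F_4=-1+e^{i(\alpha+\beta+\gamma)}$, and $f_k=|F_k(\alpha,\beta,\gamma)|^2$ for $1\le k\le4$. Then each $f_k$ is extremal in the class $Q(1,1,1)$.
   Context: $\sigma(1,1,1)$ is the set of trigonometric polynomials $f(\alpha,\beta,\gamma)=\sum_{|k|,|\ell|,|m|\le1}q(k,\ell,m)e^{i(k\alpha+\ell\beta+m\gamma)}$ with $f\ge0$ for all real $\alpha,\beta,\gamma$; $Q(1,1,1)$ is the set of $f\in\sigma(1,1,1)$ of the form $f=\sum_{j=1}^r|F_j|^2$ with $F_j=\sum_{k,\ell,m\in\{0,1\}}q_j(k,\ell,m)e^{i(k\alpha+\ell\beta+m\gamma)}$. An element $f$ of a convex cone $U$ is called extremal in $U$ if whenever $f=g+h$ with $g,h\in U$, both $g$ and $h$ are nonnegative multiples of $f$. *)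

From Stdlib Require Import Reals List.
From Coquelicot Require Import Coquelicot.
Open Scope R_scope.

Definition expi (t : R) : C := (cos t, sin t).

(* Trigonometric polynomial F = sum_{k,l,m in {0,1}} q(k,l,m) e^{i(k a + l b + m c)} *)
Definition Fpoly (q : nat -> nat -> nat -> C) (a b c : R) : C :=
  fold_right Cplus (RtoC 0)
    (flat_map (fun k => flat_map (fun l => map (fun m =>
       Cmult (q k l m) (expi (INR k * a + INR l * b + INR m * c)))
       (0 :: 1 :: nil)%nat) (0 :: 1 :: nil)%nat) (0 :: 1 :: nil)%nat).

Definition Q111 (f : R -> R -> R -> R) : Prop :=
  exists qs : list (nat -> nat -> nat -> C),
    forall a b c : R,
      f a b c = fold_right (fun q acc => (Cmod (Fpoly q a b c)) ^ 2 + acc) 0 qs.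

Definition extremal (U : (R -> R -> R -> R) -> Prop) (f : R -> R -> R -> R) : Prop :=
  U f /\
  forall g h : R -> R -> R -> R, U g -> U h ->
    (forall a b c, f a b c = g a b c + h a b c) ->
    (exists s, 0 <= s /\ forall a b c, g a b c = s * f a b c) /\
    (exists t, 0 <= t /\ forall a b c, h a b c = t * f a b c).

Definition f1 (a b c : R) : R := (Cmod (Cplus (expi (a + b)) (expi c))) ^ 2.
Definition f2 (a b c : R) : R := (Cmod (Cplus (Copp (expi b)) (expi (a + c)))) ^ 2.
Definition f3 (a b c : R) : R := (Cmod (Cplus (Copp (expi a)) (expi (b + c)))) ^ 2.
Definition f4 (a b c : R) : R := (Cmod (Cplus (Copp (RtoC 1)) (expi (a + b + c)))) ^ 2.

From Stdlib Require Import Reals List Lra.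
From Coquelicot Require Import Coquelicot.
Open Scope R_scope.

(* If f = |L|^2 with L in the span of the eight characters and f = g + h in Q(1,1,1),
   then every square |F_j|^2 occurring in g is at most f, so each F_j vanishes on the
   zero set of L.  For the four binomials L = F_k this zero set is a two-dimensional
   torus on which a multi-affine F restricts to a polynomial of degree at most two in
   each torus coordinate; testing it at the points 1, i, -1 of each circle forces
   F = lambda L, whence g = (sum_j |lambda_j|^2) f. *)

Lemma expi_add s t : expi (s + t) = (expi s * expi t)%C.
Proof. unfold expi, Cmult; simpl. rewrite cos_plus, sin_plus. f_equal; ring. Qed.

Lemma expi_add_PI t : expi (t + PI) = (- expi t)%C.
Proof. unfold expi, Copp; simpl. rewrite neg_cos, neg_sin. reflexivity. Qed.

Lemma Copp_eq0 z : (- z)%C = 0 -> z = 0.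
Proof. intros H. replace z with (- - z)%C by ring. rewrite H. ring. Qed.

Lemma Cplus_eq0 z w : (z + w)%C = 0 -> z = (- w)%C.
Proof. intros H. replace z with (z + w - w)%C by ring. rewrite H. ring. Qed.

Lemma Cmod_sq_le0 z : Cmod z ^ 2 <= 0 -> z = 0.
Proof.
  intros H. apply Cmod_eq_0. pose proof (Cmod_ge_0 z).
  replace (Cmod z ^ 2) with (Cmod z * Cmod z) in H by ring. nra.
Qed.

Definition affpoly (q : nat -> nat -> nat -> C) (x y z : C) : C :=
  (q 0 0 0 + q 1 0 0 * x + q 0 1 0 * y + q 0 0 1 * z + q 1 1 0 * (x * y)
   + q 1 0 1 * (x * z) + q 0 1 1 * (y * z) + q 1 1 1 * (x * y * z))%C%nat.

Lemma Fpoly_affpoly q a b c : Fpoly q a b c = affpoly q (expi a) (expi b) (expi c).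
Proof.
  unfold Fpoly; simpl. rewrite !expi_add.
  replace (0 * a) with 0 by ring. replace (0 * b) with 0 by ring.
  replace (0 * c) with 0 by ring. rewrite !Rmult_1_l.
  unfold affpoly. replace (expi 0) with (RtoC 1).
  - ring.
  - unfold expi. rewrite cos_0, sin_0. reflexivity.
Qed.

Definition quadC (p0 p1 p2 x : C) : C := (p0 + p1 * x + p2 * (x * x))%C.

Lemma quadC_circle_eq0 p0 p1 p2 :
  (forall t, quadC p0 p1 p2 (expi t) = 0) -> p0 = 0 /\ p1 = 0 /\ p2 = 0.
Proof.
  intros H.
  pose proof (H 0) as H1. pose proof (H (PI / 2)) as Hi. pose proof (H PI) as Hm1.
  unfold expi in H1, Hi, Hm1.
  rewrite cos_0, sin_0 in H1. rewrite cos_PI2, sin_PI2 in Hi. rewrite cos_PI, sin_PI in Hm1.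
  destruct p0, p1, p2.
  unfold quadC, Cplus, Cmult, RtoC in *; simpl in *.
  injection H1 as H1re H1im. injection Hi as Hire Hiim. injection Hm1 as Hm1re Hm1im.
  repeat split; f_equal; lra.
Qed.

Lemma quadC2_circle_eq0 d00 d01 d02 d10 d11 d12 d20 d21 d22 :
  (forall s t, quadC (quadC d00 d01 d02 (expi t)) (quadC d10 d11 d12 (expi t))
                     (quadC d20 d21 d22 (expi t)) (expi s) = 0) ->
  d00 = 0 /\ d01 = 0 /\ d02 = 0 /\ d10 = 0 /\ d11 = 0 /\ d12 = 0 /\
  d20 = 0 /\ d21 = 0 /\ d22 = 0.
Proof.
  intros H.
  assert (Hcoef : forall t, quadC d00 d01 d02 (expi t) = 0 /\
                            quadC d10 d11 d12 (expi t) = 0 /\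
                            quadC d20 d21 d22 (expi t) = 0).
  { intros t. apply quadC_circle_eq0. intros s. apply H. }
  destruct (quadC_circle_eq0 d00 d01 d02) as (? & ? & ?); [apply Hcoef|].
  destruct (quadC_circle_eq0 d10 d11 d12) as (? & ? & ?); [apply Hcoef|].
  destruct (quadC_circle_eq0 d20 d21 d22) as (? & ? & ?); [apply Hcoef|].
  repeat split; assumption.
Qed.

Definition sos (qs : list (nat -> nat -> nat -> C)) (a b c : R) : R :=
  fold_right (fun q acc => Cmod (Fpoly q a b c) ^ 2 + acc) 0 qs.

Lemma sos_ge0 qs a b c : 0 <= sos qs a b c.
Proof.
  induction qs as [|q qs IH]; unfold sos in *; cbn [fold_right]; [lra|].
  pose proof (pow2_ge_0 (Cmod (Fpoly q a b c))). lra.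
Qed.

Lemma Fpoly_eq0_of_sos_le0 qs q a b c :
  In q qs -> sos qs a b c <= 0 -> Fpoly q a b c = 0.
Proof.
  induction qs as [|q' qs IH]; [intros []|]. intros Hin Hle.
  pose proof (sos_ge0 qs a b c) as Hrest.
  pose proof (pow2_ge_0 (Cmod (Fpoly q' a b c))) as Hq'.
  unfold sos in Hle; cbn [fold_right] in Hle; fold (sos qs a b c) in Hle.
  destruct Hin as [<-|Hin].
  - apply Cmod_sq_le0. lra.
  - apply IH; [exact Hin | lra].
Qed.

Lemma sos_multiples (L : R -> R -> R -> C) qs :
  (forall q, In q qs -> exists lam, forall a b c, Fpoly q a b c = (lam * L a b c)%C) ->
  exists s, 0 <= s /\ forall a b c, sos qs a b c = s * Cmod (L a b c) ^ 2.
Proof.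
  induction qs as [|q qs IH]; intros Hmul.
  - exists 0. split; [lra|]. intros a b c. unfold sos. cbn [fold_right]. ring.
  - destruct IH as [s [Hs Hsos]]. { intros q' Hq'. apply Hmul. right. exact Hq'. }
    destruct (Hmul q (or_introl eq_refl)) as [lam Hlam].
    exists (Cmod lam ^ 2 + s). split; [pose proof (pow2_ge_0 (Cmod lam)); lra|].
    intros a b c. unfold sos; cbn [fold_right]; fold (sos qs a b c).
    rewrite Hsos, Hlam, Cmod_mult. ring.
Qed.

Lemma Q111_sos g : Q111 g -> exists qs, forall a b c, g a b c = sos qs a b c.
Proof. intros [qs Hg]. exists qs. exact Hg. Qed.

Lemma Q111_ge0 g a b c : Q111 g -> 0 <= g a b c.
Proof. intros [qs Hg]%Q111_sos. rewrite Hg. apply sos_ge0. Qed.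

Lemma Q111_Cmod_sq (L : R -> R -> R -> C) q0 :
  (forall a b c, L a b c = Fpoly q0 a b c) -> Q111 (fun a b c => Cmod (L a b c) ^ 2).
Proof. intros HL. exists (q0 :: nil). intros a b c. cbn [fold_right]. rewrite HL. ring. Qed.

Definition divides_vanishing (L : R -> R -> R -> C) : Prop :=
  forall q, (forall a b c, L a b c = 0 -> Fpoly q a b c = 0) ->
  exists lam : C, forall a b c, Fpoly q a b c = (lam * L a b c)%C.

Lemma Q111_le_Cmod_sq (L : R -> R -> R -> C) g :
  divides_vanishing L -> Q111 g -> (forall a b c, g a b c <= Cmod (L a b c) ^ 2) ->
  exists s, 0 <= s /\ forall a b c, g a b c = s * Cmod (L a b c) ^ 2.
Proof.
  intros HL [qs Hg]%Q111_sos Hle.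
  destruct (sos_multiples L qs) as [s [Hs Hsos]].
  - intros q Hin. apply HL. intros a b c HL0.
    apply (Fpoly_eq0_of_sos_le0 qs); [exact Hin|].
    specialize (Hle a b c). rewrite Hg, HL0, Cmod_0 in Hle. lra.
  - exists s. split; [exact Hs|]. intros a b c. rewrite Hg. apply Hsos.
Qed.

Lemma extremal_Cmod_sq (L : R -> R -> R -> C) q0 :
  (forall a b c, L a b c = Fpoly q0 a b c) -> divides_vanishing L ->
  extremal Q111 (fun a b c => Cmod (L a b c) ^ 2).
Proof.
  intros HL Hdiv. split; [exact (Q111_Cmod_sq L q0 HL)|].
  intros g h Hg Hh Hsum. split; apply Q111_le_Cmod_sq; try assumption;
    intros a b c; rewrite Hsum.
  - pose proof (Q111_ge0 h a b c Hh). lra.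
  - pose proof (Q111_ge0 g a b c Hg). lra.
Qed.

Lemma divides_vanishing_F1 : divides_vanishing (fun a b c => expi (a + b) + expi c)%C.
Proof.
  intros q Hq.
  assert (Hz : forall s t, affpoly q (expi s) (expi t) (- (expi s * expi t))%C = 0).
  { intros s t. rewrite <- expi_add, <- expi_add_PI, <- Fpoly_affpoly.
    apply Hq; cbv beta. rewrite expi_add_PI. ring. }
  (* the arguments are the coefficients d_jk of x^j y^k in F(x, y, - x y) *)
  destruct (quadC2_circle_eq0 (q 0 0 0)%nat (q 0 1 0)%nat 0
              (q 1 0 0)%nat (q 1 1 0 - q 0 0 1)%C%nat (- q 0 1 1)%C%nat
              0 (- q 1 0 1)%C%nat (- q 1 1 1)%C%nat)
    as (H000 & H010 & _ & H100 & H110 & H011 & _ & H101 & H111).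
  { intros s t. etransitivity; [|exact (Hz s t)]. unfold quadC, affpoly. ring. }
  apply Ceq_minus in H110. apply Copp_eq0 in H011, H101, H111.
  exists (q 0 0 1)%nat. intros a b c.
  rewrite Fpoly_affpoly, expi_add. unfold affpoly.
  rewrite H000, H010, H100, H110, H011, H101, H111. ring.
Qed.

Lemma divides_vanishing_F2 : divides_vanishing (fun a b c => - expi b + expi (a + c))%C.
Proof.
  intros q Hq.
  assert (Hz : forall s t, affpoly q (expi s) (expi s * expi t)%C (expi t) = 0).
  { intros s t. rewrite <- expi_add, <- Fpoly_affpoly. apply Hq; cbv beta. ring. }
  destruct (quadC2_circle_eq0 (q 0 0 0)%nat (q 0 0 1)%nat 0
              (q 1 0 0)%nat (q 0 1 0 + q 1 0 1)%C%nat (q 0 1 1)%nat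
              0 (q 1 1 0)%nat (q 1 1 1)%nat)
    as (H000 & H001 & _ & H100 & H010 & H011 & _ & H110 & H111).
  { intros s t. etransitivity; [|exact (Hz s t)]. unfold quadC, affpoly. ring. }
  apply Cplus_eq0 in H010.
  exists (q 1 0 1)%nat. intros a b c.
  rewrite Fpoly_affpoly, expi_add. unfold affpoly.
  rewrite H010, H000, H001, H100, H011, H110, H111. ring.
Qed.

Lemma divides_vanishing_F3 : divides_vanishing (fun a b c => - expi a + expi (b + c))%C.
Proof.
  intros q Hq.
  assert (Hz : forall s t, affpoly q (expi s * expi t)%C (expi s) (expi t) = 0).
  { intros s t. rewrite <- expi_add, <- Fpoly_affpoly. apply Hq; cbv beta. ring. }
  destruct (quadC2_circle_eq0 (q 0 0 0)%nat (q 0 0 1)%nat 0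
              (q 0 1 0)%nat (q 1 0 0 + q 0 1 1)%C%nat (q 1 0 1)%nat
              0 (q 1 1 0)%nat (q 1 1 1)%nat)
    as (H000 & H001 & _ & H010 & H100 & H101 & _ & H110 & H111).
  { intros s t. etransitivity; [|exact (Hz s t)]. unfold quadC, affpoly. ring. }
  apply Cplus_eq0 in H100.
  exists (q 0 1 1)%nat. intros a b c.
  rewrite Fpoly_affpoly, expi_add. unfold affpoly.
  rewrite H100, H000, H001, H010, H101, H110, H111. ring.
Qed.

Lemma divides_vanishing_F4 : divides_vanishing (fun a b c => - RtoC 1 + expi (a + b + c))%C.
Proof.
  intros q Hq.
  assert (Hz : forall s t, affpoly q (expi s) (expi t) (expi (- (s + t))) = 0).
  { intros s t. rewrite <- Fpoly_affpoly. apply Hq; cbv beta.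
    replace (s + t + - (s + t)) with 0 by ring.
    unfold expi. rewrite cos_0, sin_0. unfold RtoC, Cplus, Copp; simpl. f_equal; ring. }
  destruct (quadC2_circle_eq0 (q 0 0 1)%nat (q 0 1 1)%nat 0
              (q 1 0 1)%nat (q 0 0 0 + q 1 1 1)%C%nat (q 0 1 0)%nat
              0 (q 1 0 0)%nat (q 1 1 0)%nat)
    as (H001 & H011 & _ & H101 & H000 & H010 & _ & H100 & H110).
  { intros s t.
    set (x := expi s). set (y := expi t). set (z := expi (- (s + t))).
    (* z = 1 / (x y) on the zero set; multiplying by x y clears the denominator *)
    assert (Hxyz : (x * y * z)%C = 1).
    { unfold x, y, z. rewrite <- !expi_add. replace (s + t + - (s + t)) with 0 by ring.
      unfold expi. rewrite cos_0, sin_0. reflexivity. }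
    transitivity (x * y * affpoly q x y z)%C.
    - rewrite <- (Cmult_1_r (q 0 0 1)%nat), <- (Cmult_1_r (q 0 1 1)%nat),
        <- (Cmult_1_r (q 1 0 1)%nat), <- (Cmult_1_r (q 1 1 1)%nat), <- Hxyz.
      unfold quadC, affpoly. ring.
    - unfold x, y, z. rewrite Hz. ring. }
  apply Cplus_eq0 in H000.
  exists (q 1 1 1)%nat. intros a b c.
  rewrite Fpoly_affpoly, !expi_add. unfold affpoly.
  rewrite H000, H001, H011, H101, H010, H100, H110. ring.
Qed.

Definition F1_coef (k l m : nat) : C :=
  match k, l, m with 1, 1, 0 | 0, 0, 1 => RtoC 1 | _, _, _ => RtoC 0 end%nat.
Definition F2_coef (k l m : nat) : C :=
  match k, l, m with 0, 1, 0 => RtoC (-1) | 1, 0, 1 => RtoC 1 | _, _, _ => RtoC 0 end%nat.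
Definition F3_coef (k l m : nat) : C :=
  match k, l, m with 1, 0, 0 => RtoC (-1) | 0, 1, 1 => RtoC 1 | _, _, _ => RtoC 0 end%nat.
Definition F4_coef (k l m : nat) : C :=
  match k, l, m with 0, 0, 0 => RtoC (-1) | 1, 1, 1 => RtoC 1 | _, _, _ => RtoC 0 end%nat.

Ltac solve_Fpoly_coef :=
  intros a b c; rewrite Fpoly_affpoly, ?expi_add; unfold affpoly;
  cbn iota beta delta [F1_coef F2_coef F3_coef F4_coef]; ring.

Theorem proposition3 :
  extremal Q111 f1 /\ extremal Q111 f2 /\ extremal Q111 f3 /\ extremal Q111 f4.
Proof.
  split; [|split; [|split]].
  - apply (extremal_Cmod_sq _ F1_coef); [solve_Fpoly_coef | exact divides_vanishing_F1].
  - apply (extremal_Cmod_sq _ F2_coef); [solve_Fpoly_coef | exact divides_vanishing_F2].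
  - apply (extremal_Cmod_sq _ F3_coef); [solve_Fpoly_coef | exact divides_vanishing_F3].
  - apply (extremal_Cmod_sq _ F4_coef); [solve_Fpoly_coef | exact divides_vanishing_F4].
Qed.
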